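(* Let $\theta>1$, $r\in(\theta^{-1},\theta^{-1/2}]$ and $\rho\in(0,1]$, and set $s_\rho:=\max\big(1,\frac1\rho\big(\frac{\ln\theta}{\ln(r\theta)}-2\big)\big)$. Then for every $n\ge1$, every price sequence $p\in[1,\theta]^n$ with maximum $p^*$ and every prediction $y\in[1,\theta]$, \[ \frac{\mathsf{A}^\rho_r(p,y)}{p^*}\ \ge\ \max\Big(r,\ \frac{1}{r\theta}\,\mathcal{E}(p^*,y)^{s_\rho}\Big). \]
   Context: One-max search: fix $\theta>1$. An instance is a sequence of prices $p=(p_1,\dots,p_n)\in[1,\theta]^n$, revealed one at a time; the algorithm receives at the start a prediction $y\in[1,\theta]$ of $p^*:=\max_ip_i$. At each step the algorithm irrevocably accepts the current price (payoff = that price) or rejects it; if nothing is accepted by step $n$ the payoff is $1$. For $\Phi:[1,\theta]\to[1,\theta]$, the threshold algorithm $\mathsf{A}_\Phi$ accepts the first $p_i$ with $p_i\ge\Phi(y)$. Define $\varphi_r(z)=\frac{r\theta-1}{1-r}+\frac{1-r^2\theta}{1-r}\cdot\frac{z}{r\theta}$ (the line through $(r\theta,r\theta)$ and $(\theta,1/r)$), and for $\rho\in(0,1]$ the threshold \[ \Phi^\rho_r(y)=\begin{cases} r\theta & y\in[1,r\theta)\\ \varphi_r(y) & y\in[r\theta,\tfrac1r)\\ \varphi_r(\tfrac1r)+\big(\tfrac1r-\varphi_r(\tfrac1r)\big)\dfrac{y-\tfrac1r}{\rho(\theta-\tfrac1r)} & y\in[\tfrac1r,\tfrac1r+\rho(\theta-\tfrac1r))\\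 \tfrac1r & y\in[\tfrac1r+\rho(\theta-\tfrac1r),\theta].\end{cases} \] $\mathsf{A}^\rho_r:=\mathsf{A}_{\Phi^\rho_r}$. The multiplicative error is $\mathcal{E}(p^*,y)=\min\{p^*/y,\,y/p^*\}\in[\theta^{-1},1]$. *)

From Stdlib Require Import Reals List.
Import ListNotations.
Open Scope R_scope.

(* phi_r(z): the line through (r*theta, r*theta) and (theta, 1/r). *)
Definition phi_r (theta r z : R) : R :=
  (r * theta - 1) / (1 - r) + (1 - r ^ 2 * theta) / (1 - r) * (z / (r * theta)).

Definition Phi (theta r rho y : R) : R :=
  if Rlt_dec y (r * theta) then r * theta
  else if Rlt_dec y (/ r) then phi_r theta r y
  else if Rlt_dec y (/ r + rho * (theta - / r)) then
    phi_r theta r (/ r)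
    + (/ r - phi_r theta r (/ r)) * ((y - / r) / (rho * (theta - / r)))
  else / r.

Fixpoint threshold_payoff (t : R) (p : list R) : R :=
  match p with
  | [] => 1
  | x :: q => if Rle_dec t x then x else threshold_payoff t q
  end.

Definition A_Phi (Phi : R -> R) (p : list R) (y : R) : R :=
  threshold_payoff (Phi y) p.

Definition A_rho_r (theta r rho : R) (p : list R) (y : R) : R :=
  A_Phi (Phi theta r rho) p y.

Definition pmax (p : list R) : R :=
  match p with
  | [] => 1
  | x :: q => fold_right Rmax x q
  end.

Definition mult_error (pstar y : R) : R := Rmin (pstar / y) (y / pstar).

Definition s_rho (theta r rho : R) : R :=
  Rmax 1 (/ rho * (ln theta / ln (r * theta) - 2)).

(* Φ(y) always lies in [rθ, 1/r]: an accepted price is at least rθ ≥ r p*, and if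
   nothing is accepted then p* < Φ(y) ≤ 1/r, which gives the ratio r.  For the
   error-dependent bound, accepted prices are handled by y ≤ rθ Φ(y), since
   E(p*, y) p* ≤ y.  If nothing is accepted and p* > rθ, then p* < Φ(y) ≤ y, so
   E = p*/y and the bound E^s p* ≤ rθ reads p* ≤ (rθ)^(1/(s+1)) y^(s/(s+1)).  This
   weighted geometric mean is concave and nondecreasing in y, and the piecewise
   linear Φ lies below it at the knots rθ and 1/r + ρ(θ - 1/r) (the latter is where
   s ρ ln(rθ) ≥ ln θ - 2 ln(rθ) is needed), hence on all of [rθ, θ]. *)

From Stdlib Require Import Reals List Lra Psatz.
From Coquelicot Require Import Rcomplements.
Import ListNotations.
Open Scope R_scope.

Lemma exp_le x y : x <= y -> exp x <= exp y.
Proof.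
  intros [Hlt | ->]; [now apply Rlt_le, exp_increasing | apply Rle_refl].
Qed.

Lemma ln_le_inv x y : 0 < x -> 0 < y -> ln x <= ln y -> x <= y.
Proof.
  intros Hx Hy Hln. rewrite <- (exp_ln x), <- (exp_ln y) by assumption.
  now apply exp_le.
Qed.

Lemma ln_le_sub_1 x : 0 < x -> ln x <= x - 1.
Proof.
  intros Hx. pose proof (exp_ineq1_le (ln x)) as H. rewrite exp_ln in H; lra.
Qed.

Lemma Rpower_pos x w : 0 < Rpower x w.
Proof. apply exp_pos. Qed.

Lemma Rpower_le_tangent v w :
  0 < v -> 0 <= w <= 1 -> Rpower v w <= 1 + w * (v - 1).
Proof.
  intros Hv Hw.
  set (m := 1 + w * (v - 1)).
  assert (Hm : 0 < m) by (unfold m; nra).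
  (* Weigh [ln t <= t - 1] at [t = 1/m] and [t = v/m] by [1 - w] and [w]. *)
  pose proof (ln_le_sub_1 (/ m) (Rinv_0_lt_compat _ Hm)) as H1.
  pose proof (ln_le_sub_1 (v / m) (Rdiv_lt_0_compat _ _ Hv Hm)) as H2.
  rewrite ln_Rinv in H1 by exact Hm. rewrite ln_div in H2 by assumption.
  assert (Hsum : (1 - w) * (/ m - 1) + w * (v / m - 1) = 0)
    by (unfold m in *; field; lra).
  assert (Hln : w * ln v <= ln m) by nra.
  unfold Rpower. rewrite <- (exp_ln m) by exact Hm. now apply exp_le.
Qed.

Lemma Rpower_le_self x s : 0 < x <= 1 -> 1 <= s -> Rpower x s <= x.
Proof.
  intros Hx Hs.
  replace s with ((s - 1) + 1) by ring.
  rewrite Rpower_plus, Rpower_1 by lra.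
  assert (H1 : Rpower x (s - 1) <= Rpower 1 (s - 1)) by (apply Rle_Rpower_l; lra).
  unfold Rpower at 2 in H1. rewrite ln_1, Rmult_0_r, exp_0 in H1.
  nra.
Qed.

Definition lerp (x1 x2 v1 v2 x : R) : R :=
  v1 + (v2 - v1) * ((x - x1) / (x2 - x1)).

Lemma lerp_weight x1 x2 x : x1 < x2 -> x1 <= x <= x2 ->
  exists l, 0 <= l <= 1 /\ x = (1 - l) * x1 + l * x2 /\
    forall v1 v2, lerp x1 x2 v1 v2 x = (1 - l) * v1 + l * v2.
Proof.
  intros H12 Hx. exists ((x - x1) / (x2 - x1)). repeat split.
  - apply Rle_div_r; lra.
  - apply Rle_div_l; lra.
  - field; lra.
  - intros v1 v2. unfold lerp. ring.
Qed.

Lemma lerp_le_compat x1 x2 v1 v2 w1 w2 x : x1 < x2 -> x1 <= x <= x2 ->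
  v1 <= w1 -> v2 <= w2 -> lerp x1 x2 v1 v2 x <= lerp x1 x2 w1 w2 x.
Proof.
  intros H12 Hx H1 H2. destruct (lerp_weight x1 x2 x H12 Hx) as (l & Hl & _ & Hlerp).
  rewrite !Hlerp. nra.
Qed.

Lemma lerp_id x1 x2 x : x1 < x2 -> lerp x1 x2 x1 x2 x = x.
Proof. intros H12. unfold lerp. field. lra. Qed.

Lemma lerp_const x1 x2 c x : lerp x1 x2 c c x = c.
Proof. unfold lerp. ring. Qed.

Lemma lerp_scale x1 x2 c v1 v2 x :
  c * lerp x1 x2 v1 v2 x = lerp x1 x2 (c * v1) (c * v2) x.
Proof. unfold lerp. ring. Qed.

Lemma lerp_between x1 x2 v1 v2 x : x1 < x2 -> x1 <= x <= x2 -> v1 <= v2 ->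
  v1 <= lerp x1 x2 v1 v2 x <= v2.
Proof.
  intros H12 Hx Hv. rewrite <- (lerp_const x1 x2 v1 x) at 1.
  rewrite <- (lerp_const x1 x2 v2 x) at 3.
  split; apply lerp_le_compat; lra.
Qed.

Lemma lerp_le_id x1 x2 v1 v2 x : x1 < x2 -> x1 <= x <= x2 -> v1 <= x1 -> v2 <= x2 ->
  lerp x1 x2 v1 v2 x <= x.
Proof.
  intros H12 Hx H1 H2. rewrite <- (lerp_id x1 x2 x) at 2 by exact H12.
  now apply lerp_le_compat.
Qed.

Lemma id_le_lerp x1 x2 v1 v2 x : x1 < x2 -> x1 <= x <= x2 -> x1 <= v1 -> x2 <= v2 ->
  x <= lerp x1 x2 v1 v2 x.
Proof.
  intros H12 Hx H1 H2. rewrite <- (lerp_id x1 x2 x) at 1 by exact H12.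
  now apply lerp_le_compat.
Qed.

Definition geo_mean (w u v : R) : R := Rpower u (1 - w) * Rpower v w.

Lemma geo_mean_pos w u v : 0 < geo_mean w u v.
Proof. apply Rmult_lt_0_compat; apply Rpower_pos. Qed.

Lemma ln_geo_mean w u v : ln (geo_mean w u v) = (1 - w) * ln u + w * ln v.
Proof. unfold geo_mean. rewrite ln_mult, !ln_Rpower by apply Rpower_pos. ring. Qed.

Lemma geo_mean_diag w u : 0 < u -> geo_mean w u u = u.
Proof.
  intros Hu. unfold geo_mean. rewrite <- Rpower_plus.
  replace (1 - w + w) with 1 by ring. now apply Rpower_1.
Qed.

Lemma geo_mean_le_compat_r w u v v' : 0 <= w -> 0 < v <= v' ->
  geo_mean w u v <= geo_mean w u v'.
Proof.
  intros Hw Hv. unfold geo_mean. apply Rmult_le_compat_l.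
  - apply Rlt_le, Rpower_pos.
  - now apply Rle_Rpower_l.
Qed.

Lemma geo_mean_le_tangent w u x z : 0 <= w <= 1 -> 0 < x -> 0 < z ->
  geo_mean w u z <= geo_mean w u x * (1 + w * (z / x - 1)).
Proof.
  intros Hw Hx Hz.
  assert (Hzx : 0 < z / x) by now apply Rdiv_lt_0_compat.
  replace (geo_mean w u z) with (geo_mean w u x * Rpower (z / x) w).
  - apply Rmult_le_compat_l; [apply Rlt_le, geo_mean_pos | now apply Rpower_le_tangent].
  - unfold geo_mean. rewrite Rmult_assoc, Rpower_mult_distr by assumption.
    do 2 f_equal. field. lra.
Qed.

Lemma geo_mean_le_arith w u v : 0 <= w <= 1 -> 0 < u -> 0 < v ->
  geo_mean w u v <= (1 - w) * u + w * v.
Proof.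
  intros Hw Hu Hv. pose proof (geo_mean_le_tangent w u u v Hw Hu Hv) as H.
  rewrite geo_mean_diag in H by exact Hu.
  replace ((1 - w) * u + w * v) with (u * (1 + w * (v / u - 1))) by (field; lra).
  exact H.
Qed.

Lemma geo_mean_concave w u x1 x2 x : 0 <= w <= 1 -> 0 < x1 < x2 -> x1 <= x <= x2 ->
  lerp x1 x2 (geo_mean w u x1) (geo_mean w u x2) x <= geo_mean w u x.
Proof.
  intros Hw H12 Hx.
  destruct (lerp_weight x1 x2 x ltac:(lra) Hx) as (l & Hl & Hxl & Hlerp).
  rewrite Hlerp.
  pose proof (geo_mean_le_tangent w u x x1 Hw ltac:(lra) ltac:(lra)) as H1.
  pose proof (geo_mean_le_tangent w u x x2 Hw ltac:(lra) ltac:(lra)) as H2.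
  set (G := geo_mean w u x) in *.
  set (t1 := 1 + w * (x1 / x - 1)) in *. set (t2 := 1 + w * (x2 / x - 1)) in *.
  assert (Hcomb : (1 - l) * t1 + l * t2 = 1).
  { transitivity (1 + w * (((1 - l) * x1 + l * x2) / x - 1)).
    - unfold t1, t2. field. lra.
    - rewrite <- Hxl. field. lra. }
  apply Rle_trans with ((1 - l) * (G * t1) + l * (G * t2)).
  - apply Rplus_le_compat; apply Rmult_le_compat_l; lra.
  - right. transitivity (G * ((1 - l) * t1 + l * t2)); [ring|].
    rewrite Hcomb. ring.
Qed.

Lemma Rpower_div_mul_le_of_le_geo_mean a P y s :
  0 < a -> 0 < P -> 0 < y -> 0 <= s ->
  P <= geo_mean (s / (s + 1)) a y -> Rpower (P / y) s * P <= a.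
Proof.
  intros Ha HP Hy Hs HPg.
  apply ln_le in HPg; [|exact HP]. rewrite ln_geo_mean in HPg.
  assert (HlnP : (s + 1) * ln P <= ln a + s * ln y).
  { apply Rmult_le_compat_l with (r := s + 1) in HPg; [|lra].
    replace (ln a + s * ln y)
      with ((s + 1) * ((1 - s / (s + 1)) * ln a + s / (s + 1) * ln y)) by (field; lra).
    exact HPg. }
  unfold Rpower. rewrite <- (exp_ln P) at 2 by exact HP. rewrite <- exp_plus.
  rewrite <- (exp_ln a) by exact Ha. apply exp_le.
  rewrite ln_div by assumption. lra.
Qed.

Lemma threshold_payoff_cases t p :
  t <= threshold_payoff t p \/
  (threshold_payoff t p = 1 /\ Forall (fun x => x < t) p).
Proof.
  induction p as [|x q IH]; simpl.
  - now right.
  - destruct (Rle_dec t x) as [Htx|Htx]; [now left|].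
    destruct IH as [IH|[IH1 IH2]]; [now left|].
    right. split; [exact IH1|]. constructor; [lra | exact IH2].
Qed.

Lemma threshold_payoff_robust r theta t P p :
  0 < r -> In P p -> P <= theta -> r * theta <= t <= / r ->
  r * P <= threshold_payoff t p.
Proof.
  intros Hr HP HPtheta Ht.
  destruct (threshold_payoff_cases t p) as [Hacc | [Hpay Hrej]].
  - nra.
  - rewrite Forall_forall in Hrej. specialize (Hrej P HP).
    assert (Hinv : r * / r = 1) by (field; lra).
    rewrite Hpay. nra.
Qed.

Lemma pmax_In p : p <> [] -> In (pmax p) p.
Proof.
  destruct p as [|x q]; [easy|]. intros _. simpl.
  induction q as [|z q IH]; simpl; [now left|].
  apply Rmax_case; [now right; left|].
  destruct IH as [IH|IH]; [now left | now right; right].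
Qed.

Lemma mult_error_pos P y : 0 < P -> 0 < y -> 0 < mult_error P y.
Proof.
  intros HP Hy. apply Rmin_glb_lt; now apply Rdiv_lt_0_compat.
Qed.

Lemma mult_error_le_1 P y : 0 < P -> 0 < y -> mult_error P y <= 1.
Proof.
  intros HP Hy. unfold mult_error. destruct (Rle_dec P y).
  - apply Rle_trans with (P / y); [apply Rmin_l | apply Rle_div_l; lra].
  - apply Rle_trans with (y / P); [apply Rmin_r | apply Rle_div_l; lra].
Qed.

Lemma mult_error_le_div P y : mult_error P y <= y / P.
Proof. apply Rmin_r. Qed.

Lemma mult_error_eq P y : 0 < P <= y -> mult_error P y = P / y.
Proof.
  intros HPy. apply Rmin_left.
  apply Rle_trans with 1; [apply Rle_div_l | apply Rle_div_r]; lra.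
Qed.

Section Threshold.

Variables theta r rho : R.
Hypothesis theta_gt_1 : 1 < theta.
Hypothesis r_gt_inv_theta : / theta < r.
Hypothesis r_theta_le_inv_r : r * theta <= / r.
Hypothesis rho_pos : 0 < rho.
Hypothesis rho_le_1 : rho <= 1.

Lemma r_pos : 0 < r.
Proof.
  apply Rlt_trans with (/ theta); [apply Rinv_0_lt_compat; lra | exact r_gt_inv_theta].
Qed.

Lemma r_theta_gt_1 : 1 < r * theta.
Proof.
  apply Rmult_lt_compat_r with (r := theta) in r_gt_inv_theta; [|lra].
  rewrite Rinv_l in r_gt_inv_theta; lra.
Qed.

Lemma r_theta_mul_inv_r : r * theta * / r = theta.
Proof. pose proof r_pos. field. lra. Qed.

Lemma inv_r_lt_theta : / r < theta.
Proof. pose proof r_theta_gt_1. pose proof r_theta_mul_inv_r. nra. Qed.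

Lemma phi_r_lerp z : phi_r theta r z = lerp (r * theta) theta (r * theta) (/ r) z.
Proof.
  pose proof r_pos. pose proof r_theta_gt_1. pose proof inv_r_lt_theta.
  assert (r < 1) by nra.
  unfold phi_r, lerp. field. repeat split; lra.
Qed.

Lemma Phi_lerp y :
  Phi theta r rho y =
  if Rlt_dec y (r * theta) then r * theta
  else if Rlt_dec y (/ r) then lerp (r * theta) theta (r * theta) (/ r) y
  else if Rlt_dec y (/ r + rho * (theta - / r)) then
    lerp (/ r) (/ r + rho * (theta - / r))
      (lerp (r * theta) theta (r * theta) (/ r) (/ r)) (/ r) y
  else / r.
Proof.
  unfold Phi. rewrite !phi_r_lerp.
  destruct (Rlt_dec y (r * theta)); [reflexivity|].
  destruct (Rlt_dec y (/ r)); [reflexivity|].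
  destruct (Rlt_dec y (/ r + rho * (theta - / r))); [|reflexivity].
  unfold lerp at 3. replace (/ r + rho * (theta - / r) - / r) with (rho * (theta - / r)) by ring.
  reflexivity.
Qed.

Lemma threshold_knots :
  1 < r * theta <= / r /\ / r < / r + rho * (theta - / r) <= theta /\
  r * theta * / r = theta.
Proof.
  pose proof r_theta_gt_1. pose proof inv_r_lt_theta. pose proof r_theta_mul_inv_r.
  repeat split; nra.
Qed.

Lemma Phi_bounds y : r * theta <= Phi theta r rho y <= / r.
Proof.
  pose proof threshold_knots as (Ha & Hik & _).
  rewrite Phi_lerp. set (a := r * theta) in *. set (k := / r + rho * (theta - / r)) in *.
  assert (HM : a <= lerp a theta a (/ r) (/ r) <= / r) by (apply lerp_between; lra).
  destruct (Rlt_dec y a); [lra|].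
  destruct (Rlt_dec y (/ r)); [apply lerp_between; lra|].
  destruct (Rlt_dec y k); [|lra].
  pose proof (lerp_between (/ r) k (lerp a theta a (/ r) (/ r)) (/ r) y
    ltac:(lra) ltac:(lra) ltac:(lra)).
  lra.
Qed.

Lemma Phi_le_Rmax y : Phi theta r rho y <= Rmax (r * theta) y.
Proof.
  pose proof threshold_knots as (Ha & Hik & _).
  rewrite Phi_lerp. set (a := r * theta) in *. set (k := / r + rho * (theta - / r)) in *.
  assert (HM : a <= lerp a theta a (/ r) (/ r) <= / r) by (apply lerp_between; lra).
  destruct (Rlt_dec y a); [apply Rmax_l|].
  apply Rle_trans with y; [|apply Rmax_r].
  destruct (Rlt_dec y (/ r)); [apply lerp_le_id; lra|].
  destruct (Rlt_dec y k); [apply lerp_le_id; lra | lra].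
Qed.

Lemma le_mul_Phi y : y <= theta -> y <= r * theta * Phi theta r rho y.
Proof.
  intros Hy. pose proof threshold_knots as (Ha & Hik & Hait).
  rewrite Phi_lerp. set (a := r * theta) in *. set (k := / r + rho * (theta - / r)) in *.
  assert (HaM : / r <= a * lerp a theta a (/ r) (/ r)).
  { rewrite lerp_scale. apply id_le_lerp; nra. }
  destruct (Rlt_dec y a); [nra|].
  destruct (Rlt_dec y (/ r)); [rewrite lerp_scale; apply id_le_lerp; nra|].
  destruct (Rlt_dec y k); [rewrite lerp_scale; apply id_le_lerp; nra | nra].
Qed.

Lemma Phi_le_concave (g : R -> R) :
  (forall x1 x2 x, r * theta <= x1 < x2 -> x1 <= x <= x2 ->
     lerp x1 x2 (g x1) (g x2) x <= g x) ->
  (forall x x', r * theta <= x <= x' -> g x <= g x') ->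
  r * theta <= g (r * theta) ->
  / r <= g (/ r + rho * (theta - / r)) ->
  forall y, r * theta <= y <= theta -> Phi theta r rho y <= g y.
Proof.
  intros Hchord Hmono Hga Hgk y Hy.
  pose proof threshold_knots as (Ha & Hik & _).
  rewrite Phi_lerp. set (a := r * theta) in *. set (k := / r + rho * (theta - / r)) in *.
  assert (Hgt : / r <= g theta) by (apply Rle_trans with (g k); [|apply Hmono]; lra).
  assert (Hmid : forall z, a <= z <= theta -> lerp a theta a (/ r) z <= g z).
  { intros z Hz. apply Rle_trans with (lerp a theta (g a) (g theta) z).
    - apply lerp_le_compat; lra.
    - apply Hchord; lra. }
  destruct (Rlt_dec y a); [lra|].
  destruct (Rlt_dec y (/ r)); [apply Hmid; lra|].
  destruct (Rlt_dec y k).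
  - apply Rle_trans with (lerp (/ r) k (g (/ r)) (g k) y).
    + apply lerp_le_compat; try lra. apply Hmid; lra.
    + apply Hchord; lra.
  - apply Rle_trans with (g k); [lra | apply Hmono; lra].
Qed.

Lemma inv_r_le_geo_mean_knot s :
  0 <= s -> ln theta - 2 * ln (r * theta) <= s * rho * ln (r * theta) ->
  / r <= geo_mean (s / (s + 1)) (r * theta) (/ r + rho * (theta - / r)).
Proof.
  intros Hs Hsrho. pose proof threshold_knots as (Ha & Hik & Hait).
  pose proof r_pos as Hr.
  set (a := r * theta) in *. set (k := / r + rho * (theta - / r)) in *.
  assert (Hk : geo_mean rho (/ r) theta <= k).
  { unfold k. replace (/ r + rho * (theta - / r)) with ((1 - rho) * / r + rho * theta) by ring.
    apply geo_mean_le_arith; lra. }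
  apply ln_le in Hk; [|apply geo_mean_pos].
  rewrite ln_geo_mean in Hk.
  assert (Hlninv : ln (/ r) = ln theta - ln a).
  { rewrite <- Hait, ln_mult; [ring | lra | apply Rinv_0_lt_compat; lra]. }
  apply ln_le_inv; [apply Rinv_0_lt_compat; lra | apply geo_mean_pos |].
  rewrite ln_geo_mean, Hlninv. rewrite Hlninv in Hk.
  replace ((1 - s / (s + 1)) * ln a + s / (s + 1) * ln k)
    with ((ln a + s * ln k) / (s + 1)) by (field; lra).
  apply Rle_div_r; [lra|].
  nra.
Qed.

Lemma A_rho_r_consistent s p y P :
  1 <= s -> ln theta - 2 * ln (r * theta) <= s * rho * ln (r * theta) ->
  In P p -> 1 <= P <= theta -> 1 <= y <= theta ->
  Rpower (mult_error P y) s * P <= r * theta * A_rho_r theta r rho p y.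
Proof.
  intros Hs Hsrho HP HPb Hy.
  pose proof threshold_knots as (Ha & Hik & _).
  unfold A_rho_r, A_Phi. set (t := Phi theta r rho y). set (E := mult_error P y).
  assert (HE : 0 < E <= 1) by (split; [apply mult_error_pos | apply mult_error_le_1]; lra).
  assert (HEs : Rpower E s <= E) by now apply Rpower_le_self.
  destruct (threshold_payoff_cases t p) as [Hacc | [Hpay Hrej]].
  - assert (HEP : E * P <= y) by (apply Rle_div_r; [lra | apply mult_error_le_div]).
    pose proof (le_mul_Phi y (proj2 Hy)) as Hyt. fold t in Hyt.
    nra.
  - rewrite Hpay, Rmult_1_r. rewrite Forall_forall in Hrej. specialize (Hrej P HP).
    destruct (Rle_lt_dec P (r * theta)) as [HPa | HPa]; [nra|].
    assert (HPy : P < y).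
    { destruct (Rlt_or_le P y) as [HPy | HyP]; [exact HPy|].
      pose proof (Phi_le_Rmax y) as Hmax. fold t in Hmax.
      pose proof (Rmax_lub _ _ _ (Rlt_le _ _ HPa) HyP). lra. }
    assert (Hw : 0 <= s / (s + 1) <= 1) by (split; [apply Rle_div_r | apply Rle_div_l]; lra).
    unfold E. rewrite mult_error_eq by lra.
    apply Rpower_div_mul_le_of_le_geo_mean; try lra.
    apply Rle_trans with t; [lra|].
    apply Phi_le_concave; try lra.
    + intros x1 x2 x Hx12 Hx. apply geo_mean_concave; lra.
    + intros x x' Hx. apply geo_mean_le_compat_r; lra.
    + rewrite geo_mean_diag; lra.
    + apply inv_r_le_geo_mean_knot; lra.
Qed.

End Threshold.

Lemma s_rho_mul_ln_ge theta r rho : 0 < rho -> 1 < r * theta ->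
  ln theta - 2 * ln (r * theta) <= s_rho theta r rho * rho * ln (r * theta).
Proof.
  intros Hrho Ha.
  assert (HL : 0 < ln (r * theta)) by (rewrite <- ln_1; apply ln_increasing; lra).
  assert (Hs : / rho * (ln theta / ln (r * theta) - 2) <= s_rho theta r rho) by apply Rmax_r.
  assert (Hid : / rho * (ln theta / ln (r * theta) - 2) * rho * ln (r * theta)
                = ln theta - 2 * ln (r * theta)) by (field; lra).
  rewrite <- Hid. apply Rmult_le_compat_r; [lra|]. apply Rmult_le_compat_r; lra.
Qed.

Lemma mul_le_inv_of_le_inv_sqrt r theta :
  0 < r -> 0 < theta -> r <= / sqrt theta -> r * theta <= / r.
Proof.
  intros Hr Htheta Hrs.
  assert (Hsqrt : 0 < sqrt theta) by now apply sqrt_lt_R0.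
  assert (Hrs1 : r * sqrt theta <= 1).
  { apply Rmult_le_compat_r with (r := sqrt theta) in Hrs; [|lra].
    rewrite Rinv_l in Hrs; lra. }
  pose proof (sqrt_sqrt theta (Rlt_le _ _ Htheta)) as Hsq.
  assert (Hr2 : r * r * theta <= 1).
  { replace (r * r * theta) with ((r * sqrt theta) * (r * sqrt theta))
      by (rewrite <- Hsq at 3; ring).
    assert (0 <= r * sqrt theta) by nra. nra. }
  assert (Hinv : r * / r = 1) by (field; lra).
  nra.
Qed.

Theorem theorem2 (theta r rho : R) :
  1 < theta ->
  / theta < r -> r <= / sqrt theta ->
  0 < rho -> rho <= 1 ->
  forall (p : list R) (y : R),
    (1 <= length p)%nat ->
    Forall (fun x => 1 <= x <= theta) p ->
    1 <= y <= theta ->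
    A_rho_r theta r rho p y / pmax p >=
      Rmax r (/ (r * theta) * Rpower (mult_error (pmax p) y) (s_rho theta r rho)).
Proof.
  intros Htheta Hr Hrs Hrho0 Hrho1 p y Hlen Hp Hy.
  pose proof (r_pos theta r Htheta Hr) as Hr0.
  pose proof (r_theta_gt_1 theta r Htheta Hr) as Ha.
  assert (Hrr : r * theta <= / r) by (apply mul_le_inv_of_le_inv_sqrt; lra).
  assert (HP : In (pmax p) p)
    by (apply pmax_In; destruct p; [simpl in Hlen; lia | discriminate]).
  assert (HPb : 1 <= pmax p <= theta) by (rewrite Forall_forall in Hp; now apply Hp).
  apply Rle_ge, Rmax_lub; apply (Rle_div_r _ _ (pmax p)); try lra.
  - apply threshold_payoff_robust with theta; [exact Hr0 | exact HP | lra |].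
    now apply Phi_bounds.
  - rewrite Rmult_assoc, Rmult_comm. apply (Rle_div_l _ _ (r * theta)); [lra|].
    rewrite (Rmult_comm (A_rho_r _ _ _ _ _)). apply A_rho_r_consistent; try assumption.
    + apply Rmax_l.
    + now apply s_rho_mul_ln_ge.
Qed.
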